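(* Let $\widetilde{\mathbb{F}}$ be a field. There exists an SD-map $f:\mathbb{F}_5\to\widetilde{\mathbb{F}}$ if and only if $\widetilde{\mathbb{F}}$ contains a primitive fourth root of unity.
   Context: $\mathbb{F}_5=\mathbb{Z}/5\mathbb{Z}$. A map $f:\mathbb{F}\to\widetilde{\mathbb{F}}$ between fields is called an SD-map if for all $x\neq y$ in $\mathbb{F}$ one has $f(x)\neq f(y)$ and \[ f\left(\frac{x+y}{x-y}\right)=\frac{f(x)+f(y)}{f(x)-f(y)}. \] *)

From HB Require Import structures.
From mathcomp Require Import all_boot all_order all_algebra.
Set Implicit Arguments. Unset Strict Implicit. Unset Printing Implicit Defensive.
Import GRing.Theory.
Local Open Scope ring_scope.

Definition SD_map (K : fieldType) (f : 'F_5 -> K) : Prop :=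
  forall x y : 'F_5, x != y ->
    f x != f y /\ f ((x + y) / (x - y)) = (f x + f y) / (f x - f y).

From mathcomp Require Import all_boot all_order all_algebra.
From mathcomp Require Import ring.
Set Implicit Arguments. Unset Strict Implicit. Unset Printing Implicit Defensive.
Import GRing.Theory.
Local Open Scope ring_scope.

(* An SD-map [f] out of a field of characteristic other than 2 fixes 0 and 1,
   commutes with negation, forces [2 != 0] in its codomain, and sends square
   roots of -1 to square roots of -1.  In F_5 we have [2^2 = -1], so [f 2] is
   a primitive fourth root of unity.
   Conversely, 2 generates the cyclic group F_5^*, and for a primitive fourth
   root [z] the isomorphism [2^k |-> z^k], extended by [0 |-> 0], is an
   SD-map: for a multiplicative map the SD identity at [(x, y)] is the one at
   [(x / y, 1)], which leaves only the four values [t = 0, -1, 2, -2]. *)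

Lemma eqNr2 (R : idomainType) (x : R) : (2 : R) != 0 -> (- x == x) = (x == 0).
Proof.
move=> two_neq0.
by rewrite eq_sym -addr_eq0 -mulr2n -mulr_natl mulf_eq0 (negbTE two_neq0).
Qed.

Lemma sqrtN1_neq1 (R : idomainType) (x : R) :
  (2 : R) != 0 -> x ^+ 2 = -1 -> x != 1.
Proof.
move=> two_neq0 x2; apply/eqP => x1; move: x2.
by rewrite x1 expr1n => /eqP; rewrite eq_sym eqNr2 // oner_eq0.
Qed.

Lemma sqrtN1_prim4 (R : idomainType) (z : R) :
  (2 : R) != 0 -> z ^+ 2 = -1 -> 4.-primitive_root z.
Proof.
move=> two_neq0 z2.
have z4 : z ^+ 4 = 1 by rewrite (exprM z 2 2) z2 sqrrN expr1n.
have [m prim_m m_dvd4] := prim_order_exists (isT : (0 < 4)%N) z4.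
have m_ndvd2 : ~~ (m %| 2)%N.
  by rewrite (prim_order_dvd prim_m) z2 eqNr2 // oner_eq0.
have m_le4 := dvdn_leq (isT : (0 < 4)%N) m_dvd4.
by case: m prim_m m_dvd4 m_ndvd2 m_le4 => [|[|[|[|[|m]]]]].
Qed.

Lemma prim4_expr2 (R : idomainType) (z : R) :
  4.-primitive_root z -> z ^+ 2 = -1.
Proof.
move=> prim_z; move: (prim_expr_order prim_z).
rewrite (exprM z 2 2) => /eqP.
by rewrite sqrf_eq1 -(prim_order_dvd prim_z) => /eqP.
Qed.

Section SDQuotient.

Variable F : fieldType.
Implicit Types u x y : F.

Definition sd_quot x y := (x + y) / (x - y).

Lemma sd_quotE u x y : x != y -> (u == sd_quot x y) = (u * (x - y) == x + y).
Proof.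
by move=> xy; rewrite -{1}[u]divr1 eqr_div ?oner_neq0 ?subr_eq0 // mulr1.
Qed.

Lemma sd_quotx0 x : x != 0 -> sd_quot x 0 = 1.
Proof. by move=> x0; rewrite /sd_quot addr0 subr0 divff. Qed.

Lemma sd_quot0x x : x != 0 -> sd_quot 0 x = -1.
Proof. by move=> x0; rewrite /sd_quot add0r sub0r invrN mulrN divff. Qed.

Lemma sd_quotNx x : sd_quot (- x) x = 0.
Proof. by rewrite /sd_quot addNr mul0r. Qed.

Lemma sd_quot_div x y : y != 0 -> sd_quot x y = sd_quot (x / y) 1.
Proof.
move=> y0.
by rewrite /sd_quot -{1 2}(divff y0) -mulrDl -mulrBl invf_div mulrA divfK.
Qed.

Lemma sd_quot1_sqrtN1 u : u != 1 -> (sd_quot u 1 == - u) = (u ^+ 2 == -1).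
Proof.
move=> u1; rewrite eq_sym sd_quotE // mulNr mulrBr mulr1 -expr2 opprB.
by rewrite (inj_eq (addrI u)) eqr_oppLR.
Qed.

Lemma sd_quot_sqrtN1 x : (2 : F) != 0 -> x ^+ 2 = -1 -> sd_quot x 1 = - x.
Proof.
by move=> two_neq0 x2; apply/eqP; rewrite sd_quot1_sqrtN1 ?x2 ?sqrtN1_neq1.
Qed.

End SDQuotient.

(* For [f : 'F_5 -> K], [SD_map f] is convertible to [sd_map f]. *)
Definition sd_map (F K : fieldType) (f : F -> K) : Prop :=
  forall x y, x != y -> f x != f y /\ f (sd_quot x y) = sd_quot (f x) (f y).

Section SDMapProperties.

Variables (F K : fieldType) (f : F -> K).
Hypotheses (f_sd : sd_map f) (two_neq0 : (2 : F) != 0).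

Lemma sd_map_quot x y : x != y -> f (sd_quot x y) * (f x - f y) = f x + f y.
Proof. by move=> xy; have [fxy ->] := f_sd xy; apply/eqP; rewrite -sd_quotE. Qed.

Lemma sd_map1 : f 1 = 1.
Proof.
have N1_neq1 : (-1 : F) != 1 by rewrite eqNr2 ?oner_eq0.
have N1_neq0 : (-1 : F) != 0 by rewrite oppr_eq0 oner_neq0.
have [fN1_neq_f1 _] := f_sd N1_neq1.
have := sd_map_quot (oner_neq0 F); have := sd_map_quot N1_neq0.
rewrite !sd_quotx0 ?oner_neq0 // => fN1 f1.
(* Both [(1, 0)] and [(-1, 0)] have quotient 1; subtract the two identities. *)
have : (f 1 - 1) * (f 1 - f (-1)) = 0.
  have -> : (f 1 - 1) * (f 1 - f (-1)) =
            f 1 * (f 1 - f 0) - f 1 * (f (-1) - f 0) - (f 1 - f (-1)) by ring.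
  by rewrite f1 fN1; ring.
move/eqP; rewrite mulf_eq0 !subr_eq0 [_ == f (-1)]eq_sym (negbTE fN1_neq_f1).
by rewrite orbF => /eqP.
Qed.

Lemma sd_map_two_neq0 : (2 : K) != 0.
Proof.
apply/negP => /eqP two_eq0.
have zero_neq1 : (0 : F) != 1 by rewrite eq_sym oner_eq0.
have N1_neq1 : (-1 : F) != 1 by rewrite eqNr2 ?oner_eq0.
have [f0_neq_f1 _] := f_sd zero_neq1.
have [fN1_neq_f1 _] := f_sd N1_neq1.
have := sd_map_quot zero_neq1.
rewrite sd_quot0x ?oner_neq0 // sd_map1 => fN1.
(* With [1 = -1] in [K], the SD identity at [(0, 1)] would force [f (-1) = 1]. *)
have : (f (-1) - 1) * (f 0 - 1) = 0.
  by rewrite mulrBl fN1 -two_eq0; ring.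
rewrite sd_map1 in f0_neq_f1 fN1_neq_f1.
by move/eqP; rewrite mulf_eq0 !subr_eq0 (negbTE fN1_neq_f1) (negbTE f0_neq_f1).
Qed.

Lemma sd_map0 : f 0 = 0.
Proof.
move: (sd_map_quot (oner_neq0 F)).
rewrite sd_quotx0 ?oner_neq0 // sd_map1 mul1r.
by move/eqP; rewrite (inj_eq (addrI 1)) (eqNr2 _ sd_map_two_neq0) => /eqP.
Qed.

Lemma sd_mapN x : f (- x) = - f x.
Proof.
have [->|x_neq0] := eqVneq x 0; first by rewrite oppr0 sd_map0 oppr0.
have Nx_neq_x : - x != x by rewrite eqNr2.
move: (sd_map_quot Nx_neq_x); rewrite sd_quotNx sd_map0 mul0r.
by move/eqP; rewrite eq_sym addr_eq0 => /eqP.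
Qed.

Lemma sd_map_sqrtN1 x : x ^+ 2 = -1 -> f x ^+ 2 = -1.
Proof.
move=> x2; have [fx_neq_f1 fquot] := f_sd (sqrtN1_neq1 two_neq0 x2).
rewrite sd_map1 in fx_neq_f1 fquot.
rewrite (sd_quot_sqrtN1 two_neq0 x2) sd_mapN in fquot.
by apply/eqP; rewrite -sd_quot1_sqrtN1 // -fquot.
Qed.

End SDMapProperties.

Lemma sd_map_of_morph (F K : fieldType) (f : F -> K) :
    injective f -> f 0 = 0 -> {morph f : x y / x * y} ->
    (forall t, t != 1 -> f (sd_quot t 1) = sd_quot (f t) 1) ->
  sd_map f.
Proof.
move=> f_inj f0 fM f_quot x y xy; split; first by rewrite (inj_eq f_inj).
have f_neq0 u : u != 0 -> f u != 0 by rewrite -f0 (inj_eq f_inj).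
have [y0|y_neq0] := eqVneq y 0.
  rewrite y0 in xy *.
  have f1 : f 1 = 1.
    by apply: (mulfI (f_neq0 1 (oner_neq0 F))); rewrite -fM !mulr1.
  by rewrite f0 !sd_quotx0 ?f_neq0.
have fy_neq0 := f_neq0 y y_neq0.
have xy_neq1 : x / y != 1 by apply: contra xy => /eqP/divr1_eq ->.
have fx : f x = f (x / y) * f y by rewrite -fM divfK.
by rewrite (sd_quot_div x y_neq0) f_quot // fx (sd_quot_div _ fy_neq0) mulfK.
Qed.

Section RootTransfer.

Variables (F K : fieldType) (n : nat) (a : F) (z : K) (log : F -> nat).
Hypotheses (a_prim : n.-primitive_root a) (z_prim : n.-primitive_root z).
Hypothesis exp_log : forall x, x != 0 -> a ^+ log x = x.

Definition root_transfer x := if x == 0 then 0 else z ^+ log x.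

Lemma root_transfer0 : root_transfer 0 = 0.
Proof. by rewrite /root_transfer eqxx. Qed.

Lemma root_transfer_eq0 x : (root_transfer x == 0) = (x == 0).
Proof.
have [->|x_neq0] := eqVneq x 0; first by rewrite root_transfer0 eqxx.
have z_neq0 : z != 0.
  by rewrite (prim_root_eq0 z_prim) -lt0n (prim_order_gt0 z_prim).
by rewrite /root_transfer (negbTE x_neq0) (negbTE (expf_neq0 _ z_neq0)).
Qed.

Lemma root_transferX m : root_transfer (a ^+ m) = z ^+ m.
Proof.
have a_neq0 : a != 0.
  by rewrite (prim_root_eq0 a_prim) -lt0n (prim_order_gt0 a_prim).
rewrite /root_transfer expf_eq0 (negbTE a_neq0) andbF.
apply/eqP; rewrite (eq_prim_root_expr z_prim) -(eq_prim_root_expr a_prim).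
by rewrite exp_log ?expf_neq0.
Qed.

Lemma root_transferM : {morph root_transfer : x y / x * y}.
Proof.
move=> x y; have [->|x_neq0] := eqVneq x 0.
  by rewrite mul0r root_transfer0 mul0r.
have [->|y_neq0] := eqVneq y 0; first by rewrite mulr0 root_transfer0 mulr0.
by rewrite -(exp_log x_neq0) -(exp_log y_neq0) -exprD !root_transferX exprD.
Qed.

Lemma root_transfer_inj : injective root_transfer.
Proof.
move=> x y fxy; have [x0|x_neq0] := eqVneq x 0.
  rewrite x0; apply/esym/eqP.
  by rewrite -root_transfer_eq0 -fxy x0 root_transfer0.
have y_neq0 : y != 0 by rewrite -root_transfer_eq0 -fxy root_transfer_eq0.
move: fxy; rewrite -(exp_log x_neq0) -(exp_log y_neq0) !root_transferX.
move/eqP; rewrite (eq_prim_root_expr z_prim) -(eq_prim_root_expr a_prim).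
by move/eqP.
Qed.

End RootTransfer.

Lemma F5_two_neq0 : (2 : 'F_5) != 0. Proof. by []. Qed.

Lemma F5_sqrtN1 : (2 : 'F_5) ^+ 2 = -1. Proof. by apply/eqP. Qed.

Lemma F5_enum (t : 'F_5) : t \in [:: 0; 1; -1; 2; -2].
Proof. by case: t => [[|[|[|[|[|?]]]]] ?]. Qed.

Definition F5_log (x : 'F_5) : nat := index x [:: 1; 2; -1; -2].

Lemma F5_exp_log (x : 'F_5) : x != 0 -> 2 ^+ F5_log x = x.
Proof. by case: x => [[|[|[|[|[|?]]]]] ?] // _; apply/eqP. Qed.

Lemma sd_map_F5 (K : fieldType) (z : K) :
  4.-primitive_root z -> sd_map (root_transfer z F5_log).
Proof.
move=> z_prim; set f := root_transfer z F5_log.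
have two_prim := sqrtN1_prim4 F5_two_neq0 F5_sqrtN1.
have f0 : f 0 = 0 := root_transfer0 z F5_log.
have fX m : f (2 ^+ m) = z ^+ m := root_transferX two_prim z_prim F5_exp_log m.
have fM : {morph f : x y / x * y} := root_transferM two_prim z_prim F5_exp_log.
have fN1 : f (-1) = -1 by rewrite -F5_sqrtN1 fX prim4_expr2.
have fN x : f (- x) = - f x by rewrite -mulN1r fM fN1 mulN1r.
have f2 : f 2 = z by rewrite -[2 in LHS]expr1 fX.
have z2 := prim4_expr2 z_prim.
have K_two_neq0 : (2 : K) != 0 := prim_root_dvd_eq0 z_prim (isT : (2 %| 4)%N).
apply: (sd_map_of_morph (root_transfer_inj two_prim z_prim F5_exp_log) f0 fM).
move=> t t_neq1; have := F5_enum t.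
rewrite -/f !inE => /orP[|/orP[|/orP[|/orP[]]]] /eqP t_eq;
  rewrite t_eq ?eqxx // in t_neq1 *.
- by rewrite !sd_quot0x ?oner_neq0 // fN1 f0.
- by rewrite sd_quotNx fN1 sd_quotNx f0.
- rewrite (sd_quot_sqrtN1 F5_two_neq0 F5_sqrtN1) fN f2.
  by rewrite (sd_quot_sqrtN1 K_two_neq0 z2).
- have N2_sqrtN1 : (-2 : 'F_5) ^+ 2 = -1 by rewrite sqrrN F5_sqrtN1.
  have Nz_sqrtN1 : (- z) ^+ 2 = -1 by rewrite sqrrN.
  rewrite (sd_quot_sqrtN1 F5_two_neq0 N2_sqrtN1) opprK fN f2.
  by rewrite (sd_quot_sqrtN1 K_two_neq0 Nz_sqrtN1) opprK.
Qed.

Theorem proposition2p3 (K : fieldType) :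
  (exists f : 'F_5 -> K, SD_map f) <-> (exists z : K, 4.-primitive_root z).
Proof.
split=> [[f f_sd] | [z z_prim]].
- exists (f 2); apply: sqrtN1_prim4 (sd_map_two_neq0 f_sd F5_two_neq0) _.
  exact: (sd_map_sqrtN1 f_sd F5_two_neq0 F5_sqrtN1).
- by exists (root_transfer z F5_log); apply: sd_map_F5.
Qed.
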